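(* Let $S_1, S_2$ be triangle meshes with $n_1$ and $n_2$ vertices, and for $i=1,2$ let $\Phi_i \in \mathbb{R}^{n_i \times k}$ be the matrix of the first $k$ eigenfunctions of the cotangent Laplace–Beltrami operator of $S_i$, normalized so that $\Phi_i^T A_i \Phi_i = \mathbb{I}$, where $A_i$ is the area (mass) matrix of $S_i$. Put $\Phi_i^{\dagger} = \Phi_i^T A_i$. Let $F_1 \in \mathbb{R}^{n_1\times p}$ and $F_2 \in \mathbb{R}^{n_2 \times p}$ be feature matrices produced by a feature extractor that is complete, i.e. $F_i = \Phi_i \Phi_i^{\dagger} F_i$ for $i=1,2$. Let $\mathbf{A}_1 = \Phi_1^{\dagger} F_1$, $\mathbf{A}_2 = \Phi_2^{\dagger} F_2$, and $\mathbf{C}_{\rm opt} = \arg\min_{\mathbf{C}\in\mathbb{R}^{k\times k}} \|\mathbf{C}\mathbf{A}_1 - \mathbf{A}_2\|_F$. Assume that all optimization problems below have unique global minimizers (in particular $\mathbf{A}_1$ has full rank, and in problems of the form $\arg\min_{\Pi}\|\Pi G_1 - G_2\|$ the rows of $G_1$ are pairwise distinct). Then: (1) If $\Pi F_1 = F_2$ for some point-to-point map matrix $\Pi \in \{0,1\}^{n_2\times n_1}$, then $\mathbf{C}_{12} = \Phi_2^{\dagger}\Pi\Phi_1$ is basis-aligning; moreover $\mathbf{C}_{12} = \mathbf{C}_{\rm opt}$, and the point-to-point map obtained from $\mathbf{C}_{\rm opt}$ by the adjoint method, $\arg\min_{\Pi'} \|\Pi'\Phi_1 - \Phi_2 \mathbf{C}_{\rm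 opt}\|$, coincides with the one obtained by nearest-neighbour search in feature space, $\arg\min_{\Pi'}\|\Pi' F_1 - F_2\|$. (2) Conversely, if $F_1, F_2$ are complete and $\mathbf{C}_{\rm opt}$ is basis-aligning, then $\arg\min_{\Pi}\|\Pi F_1 - F_2\| = \arg\min_{\Pi}\|\Pi\Phi_1 - \Phi_2 \mathbf{C}_{\rm opt}\|$. Here all minimizations over $\Pi$ range over point-to-point map matrices $\Pi\in\{0,1\}^{n_2\times n_1}$.
   Context: A point-to-point map from the vertices of $S_2$ to the vertices of $S_1$ is encoded as a matrix $\Pi \in \{0,1\}^{n_2 \times n_1}$ with exactly one entry equal to $1$ in each row ($\Pi(i,j)=1$ iff vertex $i$ of $S_2$ is mapped to vertex $j$ of $S_1$). Norms $\|\cdot\|$ are Frobenius norms. A functional map $\mathbf{C}_{12}\in\mathbb{R}^{k\times k}$ is called basis-aligning if there exists a point-to-point map matrix $\Pi_{21}\in\{0,1\}^{n_2\times n_1}$ such that $\Phi_2 \mathbf{C}_{12} = \Pi_{21}\Phi_1$. The ''adjoint method'' converts a functional map $\mathbf{C}_{12}$ into a point-to-point map by solving $\arg\min_{\Pi}\|\Pi\Phi_1 - \Phi_2\mathbf{C}_{12}\|$, i.e. nearest-neighbour search between rows of $\Phi_1$ and rows of $\Phi_2\mathbf{C}_{12}$. *)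

From mathcomp Require Import all_boot all_order all_algebra.
Set Implicit Arguments. Unset Strict Implicit. Unset Printing Implicit Defensive.
Import Order.TTheory GRing.Theory Num.Theory.
Local Open Scope ring_scope.

Definition frob (R : rcfType) (m n : nat) (M : 'M[R]_(m, n)) : R :=
  Num.sqrt (\sum_(i < m) \sum_(j < n) M i j ^+ 2).

Definition is_p2p (R : rcfType) (n2 n1 : nat) (P : 'M[R]_(n2, n1)) : Prop :=
  (forall i j, P i j = 0 \/ P i j = 1) /\
  (forall i, exists! j, P i j = 1).

Definition is_argmin (T : Type) (R : rcfType) (D : T -> Prop) (f : T -> R) (x : T) : Prop :=
  D x /\ forall y, D y -> f x <= f y.

Definition unique_argmin (T : Type) (R : rcfType) (D : T -> Prop) (f : T -> R) : Prop :=
  exists x, is_argmin D f x /\ forall y, is_argmin D f y -> y = x.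

Definition pinvA (R : rcfType) (n k : nat) (Phi : 'M[R]_(n, k)) (A : 'M[R]_n) : 'M[R]_(k, n) :=
  Phi^T *m A.

Definition complete (R : rcfType) (n k p : nat) (Phi : 'M[R]_(n, k)) (A : 'M[R]_n)
  (F : 'M[R]_(n, p)) : Prop :=
  F = Phi *m (pinvA Phi A *m F).

Definition basis_aligning (R : rcfType) (n1 n2 k : nat)
  (Phi1 : 'M[R]_(n1, k)) (Phi2 : 'M[R]_(n2, k)) (C : 'M[R]_k) : Prop :=
  exists P : 'M[R]_(n2, n1), is_p2p P /\ Phi2 *m C = P *m Phi1.

Definition spd (R : rcfType) (n : nat) (A : 'M[R]_n) : Prop :=
  A^T = A /\ forall v : 'cV[R]_n, v != 0 -> 0 < (v^T *m A *m v) 0 0.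

From mathcomp Require Import all_boot all_order all_algebra.
From mathcomp Require Import ring.
Import Order.TTheory GRing.Theory Num.Theory.
Set Implicit Arguments. Unset Strict Implicit.
Local Open Scope ring_scope.

(** Completeness writes [F_i = Phi_i A_i]. The least-squares residual
    [E = Copt A1 - A2] is orthogonal to every [X A1] (normal equation), and
    uniqueness of [Copt] forces [A1] to be row-free. In (1),
    [C12 = Phi2^dagger P Phi1] fits [A2] exactly, so it is [Copt], and
    row-freeness turns [Phi2 Copt A1 = P Phi1 A1] into [Phi2 Copt = P Phi1].
    In (2), [Q F1 - F2 = (Q Phi1 - Phi2 Copt) A1 + Phi2 E] is an orthogonal
    sum, so the aligning map minimises both objectives, and uniqueness of the
    minimisers identifies the two argmins. *)

Section Argmin.

Variables (T : Type) (R : rcfType) (D : T -> Prop).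

Lemma argmin_unique (f : T -> R) (x y : T) :
  unique_argmin D f -> is_argmin D f x -> is_argmin D f y -> y = x.
Proof. by move=> [z [_ zE]] /zE -> /zE ->. Qed.

Lemma argmin_iff_common (f g : T -> R) (x : T) :
  unique_argmin D f -> unique_argmin D g ->
  is_argmin D f x -> is_argmin D g x ->
  forall y, is_argmin D f y <-> is_argmin D g y.
Proof.
move=> uf ug fx gx y.
by split=> [/(argmin_unique uf fx) | /(argmin_unique ug gx)] ->.
Qed.

End Argmin.

Definition frobdot (R : rcfType) m n (U V : 'M[R]_(m, n)) : R := \tr (U *m V^T).

Section FrobeniusInnerProduct.

Variables (R : rcfType) (m n : nat).
Implicit Types U V W : 'M[R]_(m, n).

Lemma frobdotE U V : frobdot U V = \sum_(i < m) \sum_(j < n) U i j * V i j.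
Proof.
by apply: eq_bigr => i _; rewrite !mxE; apply: eq_bigr => j _; rewrite mxE.
Qed.

Lemma frob_dot U : frob U = Num.sqrt (frobdot U U).
Proof. by rewrite frobdotE. Qed.

Lemma frobdot_ge0 U : 0 <= frobdot U U.
Proof.
rewrite frobdotE; apply: sumr_ge0 => i _; apply: sumr_ge0 => j _.
by rewrite -expr2 sqr_ge0.
Qed.

Lemma ler_frob U V : (frob U <= frob V) = (frobdot U U <= frobdot V V).
Proof. by rewrite !frob_dot ler_sqrt // frobdot_ge0. Qed.

Lemma frob_ge0 U : 0 <= frob U.
Proof. by rewrite frob_dot sqrtr_ge0. Qed.

Lemma frob0 : frob (0 : 'M[R]_(m, n)) = 0.
Proof. by rewrite frob_dot /frobdot mul0mx mxtrace0 sqrtr0. Qed.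

Lemma frobdotC U V : frobdot U V = frobdot V U.
Proof. by rewrite /frobdot -mxtrace_tr trmx_mul trmxK. Qed.

Lemma frobdotDl U V W : frobdot (U + V) W = frobdot U W + frobdot V W.
Proof. by rewrite /frobdot mulmxDl mxtraceD. Qed.

Lemma frobdotDr U V W : frobdot U (V + W) = frobdot U V + frobdot U W.
Proof. by rewrite frobdotC frobdotDl !(frobdotC U). Qed.

Lemma frobdotZl t U V : frobdot (t *: U) V = t * frobdot U V.
Proof. by rewrite /frobdot -scalemxAl mxtraceZ. Qed.

Lemma frobdotZr t U V : frobdot U (t *: V) = t * frobdot U V.
Proof. by rewrite frobdotC frobdotZl frobdotC. Qed.

Lemma frobdot_mull l (L : 'M[R]_(m, l)) (X : 'M[R]_(l, n)) V :
  frobdot (L *m X) V = frobdot X (L^T *m V).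
Proof. by rewrite /frobdot trmx_mul trmxK -mulmxA mxtrace_mulC mulmxA. Qed.

Lemma frob_le_addl_orth U V : frobdot U V = 0 -> frob V <= frob (U + V).
Proof.
move=> UV0; rewrite ler_frob frobdotDl !frobdotDr UV0 frobdotC UV0.
by rewrite add0r addr0 lerDr frobdot_ge0.
Qed.

Lemma frob_eq0_argmin (T : Type) (D : T -> Prop) (f : T -> 'M[R]_(m, n)) x :
  D x -> f x = 0 -> is_argmin D (fun y => frob (f y)) x.
Proof. by move=> Dx fx0; split=> // y _; rewrite fx0 frob0 frob_ge0. Qed.

End FrobeniusInnerProduct.

Lemma linear_coef_eq0 (R : realFieldType) (b c : R) :
  0 <= c -> (forall t, 0 <= 2 * t * b + t ^+ 2 * c) -> b = 0.
Proof.
move=> c_ge0 quad_ge0; have c1_gt0 : 0 < c + 1 by rewrite ltr_wpDl.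
set u := b / (c + 1); have bE : b = u * (c + 1) by rewrite divfK ?gt_eqF.
have := quad_ge0 (- u).
have -> : 2 * - u * b + (- u) ^+ 2 * c = - (u ^+ 2 * (c + 2)) by rewrite bE; ring.
rewrite oppr_ge0 pmulr_lle0 ?ltr_wpDl // => u2_le0.
have u0 : u = 0 by apply/eqP; rewrite -sqrf_eq0 eq_le u2_le0 sqr_ge0.
by rewrite bE u0 mul0r.
Qed.

Section LeastSquares.

Variables (R : rcfType) (k p : nat) (A B : 'M[R]_(k, p)).

Let lsq (C : 'M[R]_k) := frob (C *m A - B).

Lemma lsq_normal (C0 : 'M[R]_k) :
  is_argmin (fun _ => True) lsq C0 ->
  forall D : 'M[R]_k, frobdot (D *m A) (C0 *m A - B) = 0.
Proof.
move=> [_ C0_min] D; set E := C0 *m A - B; set DA := D *m A.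
rewrite frobdotC; apply: (linear_coef_eq0 (frobdot_ge0 DA)) => t.
have : frob E <= frob (E + t *: DA).
  by rewrite /E /DA scalemxAl addrAC -mulmxDl; exact: C0_min.
clearbody E DA; rewrite ler_frob frobdotDl !frobdotDr !frobdotZl !frobdotZr.
rewrite (frobdotC DA E).
have -> : frobdot E E + t * frobdot E DA + (t * frobdot E DA + t * (t * frobdot DA DA))
    = frobdot E E + (2 * t * frobdot E DA + t ^+ 2 * frobdot DA DA) by ring.
by rewrite lerDl.
Qed.

Lemma lsq_unique_row_free : unique_argmin (fun _ => True) lsq -> row_free A.
Proof.
move=> lsq_uniq; have [C0 [C0_min _]] := lsq_uniq.
have C0K_min : is_argmin (fun _ => True) lsq (C0 + kermx A).
  by rewrite /is_argmin /lsq mulmxDl mulmx_ker addr0.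
rewrite -kermx_eq0; apply/eqP; apply: (addrI C0); rewrite addr0.
exact: argmin_unique lsq_uniq C0_min C0K_min.
Qed.

Lemma lsq_exact_fit (C C0 : 'M[R]_k) :
  unique_argmin (fun _ => True) lsq -> is_argmin (fun _ => True) lsq C0 ->
  C *m A = B -> C = C0.
Proof.
move=> lsq_uniq C0_min CAB; apply: argmin_unique lsq_uniq C0_min _.
by apply: frob_eq0_argmin; rewrite // CAB subrr.
Qed.

Lemma lsq_residual_min n (C0 : 'M[R]_k) (L Y : 'M[R]_(n, k)) :
  is_argmin (fun _ => True) lsq C0 ->
  frob (L *m (C0 *m A - B)) <= frob (Y *m A + L *m (C0 *m A - B)).
Proof.
move=> C0_min; apply: frob_le_addl_orth.
by rewrite frobdotC frobdot_mull frobdotC mulmxA lsq_normal.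
Qed.

End LeastSquares.

Theorem theorem1 (R : rcfType) (n1 n2 k p : nat)
  (M1 : 'M[R]_n1) (M2 : 'M[R]_n2)
  (Phi1 : 'M[R]_(n1, k)) (Phi2 : 'M[R]_(n2, k))
  (F1 : 'M[R]_(n1, p)) (F2 : 'M[R]_(n2, p))
  (Copt : 'M[R]_k) :
  spd M1 -> spd M2 ->
  Phi1^T *m M1 *m Phi1 = 1%:M ->
  Phi2^T *m M2 *m Phi2 = 1%:M ->
  complete Phi1 M1 F1 -> complete Phi2 M2 F2 ->
  let A1 := pinvA Phi1 M1 *m F1 in
  let A2 := pinvA Phi2 M2 *m F2 in
  (* Copt is the (unique) global minimizer of ||C A1 - A2|| *)
  is_argmin (fun _ => True) (fun C : 'M[R]_k => frob (C *m A1 - A2)) Copt ->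
  unique_argmin (fun _ => True) (fun C : 'M[R]_k => frob (C *m A1 - A2)) ->
  (* the point-to-point problems have unique minimizers *)
  unique_argmin (@is_p2p R n2 n1) (fun P => frob (P *m F1 - F2)) ->
  unique_argmin (@is_p2p R n2 n1) (fun P => frob (P *m Phi1 - Phi2 *m Copt)) ->
  (* (1) *)
  (forall P : 'M[R]_(n2, n1), is_p2p P -> P *m F1 = F2 ->
     let C12 := pinvA Phi2 M2 *m P *m Phi1 in
     [/\ basis_aligning Phi1 Phi2 C12,
         C12 = Copt &
         forall P' : 'M[R]_(n2, n1),
           is_argmin (@is_p2p R n2 n1) (fun Q => frob (Q *m Phi1 - Phi2 *m Copt)) P'
           <-> is_argmin (@is_p2p R n2 n1) (fun Q => frob (Q *m F1 - F2)) P'])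
  /\
  (* (2) *)
  (basis_aligning Phi1 Phi2 Copt ->
     forall P' : 'M[R]_(n2, n1),
       is_argmin (@is_p2p R n2 n1) (fun Q => frob (Q *m F1 - F2)) P'
       <-> is_argmin (@is_p2p R n2 n1) (fun Q => frob (Q *m Phi1 - Phi2 *m Copt)) P').
Proof.
move=> _ _ _ _ F1E F2E A1 A2 Copt_min lsq_uniq uniq_feat uniq_adj.
rewrite /complete -/A1 -/A2 in F1E F2E.
have aligned_adj_min P : is_p2p P -> Phi2 *m Copt = P *m Phi1 ->
    is_argmin (@is_p2p R n2 n1) (fun Q => frob (Q *m Phi1 - Phi2 *m Copt)) P.
  by move=> P_p2p PhiC; apply: frob_eq0_argmin; rewrite // PhiC subrr.
split=> [P P_p2p PF C12 | [P [P_p2p PhiC]] P'].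
  have C12_fit : C12 *m A1 = A2 by rewrite /C12 /A2 /pinvA -!mulmxA -F1E PF.
  have C12_opt : C12 = Copt := lsq_exact_fit lsq_uniq Copt_min C12_fit.
  have PhiC : Phi2 *m Copt = P *m Phi1.
    apply: (row_free_inj (lsq_unique_row_free lsq_uniq)).
    by rewrite /= -mulmxA -C12_opt C12_fit -F2E -PF F1E mulmxA.
  split=> //; first by exists P; rewrite C12_opt.
  apply: argmin_iff_common uniq_adj uniq_feat (aligned_adj_min P P_p2p PhiC) _.
  by apply: frob_eq0_argmin; rewrite // PF subrr.
have residualE Q : Q *m F1 - F2
    = (Q *m Phi1 - Phi2 *m Copt) *m A1 + Phi2 *m (Copt *m A1 - A2).
  by rewrite F1E F2E mulmxBl mulmxBr !mulmxA addrA subrK.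
have feat_min : is_argmin (@is_p2p R n2 n1) (fun Q => frob (Q *m F1 - F2)) P.
  split=> // Q _ /=; rewrite !residualE PhiC subrr mul0mx add0r.
  exact: lsq_residual_min.
exact: argmin_iff_common uniq_feat uniq_adj feat_min (aligned_adj_min P P_p2p PhiC) P'.
Qed.
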